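(* Let $\mathcal{A}$ be a finite set of alternatives and let $u,w\colon\mathcal{A}\times\mathbb{R}\to\mathbb{R}$ be two quasi-linear utility functions. (1) If both $u$ and $w$ pos-represent the same preference, then there exists a constant $C\in\mathbb{R}$ such that $w(a,z)=u(a,z)+C$ for all $a\in\mathcal{A}$, $z\in\mathbb{R}$. (2) If there exists a constant $C\geqslant 0$ such that $w(a,z)=u(a,z)-C$ for all $a\in\mathcal{A}$, $z\in\mathbb{R}$, then $w$ pos-represents every preference that is pos-represented by $u$.
   Context: A preference is a complete, transitive binary relation $\succcurlyeq$ on $\mathcal{A}\times\mathbb{R}$, where $(a,z)$ means that alternative $a$ is chosen and the agent pays $z$. A function $u\colon\mathcal{A}\times\mathbb{R}\to\mathbb{R}$ pos-represents $\succcurlyeq$ if for all $a,b\in\mathcal{A}$ and $z_a,z_b\in\mathbb{R}$ such that $u(a,z_a)\geqslant 0$ or $u(b,z_b)\geqslant 0$, one has $(a,z_a)\succcurlyeq(b,z_b)\iff u(a,z_a)\geqslant u(b,z_b)$. A utility function $u$ is quasi-linear if $u(a,z)=v(a)-z$ for some function $v\colon\mathcal{A}\to\mathbb{R}$. *)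

From mathcomp Require Import all_boot all_order all_algebra.
From mathcomp Require Import reals.
Set Implicit Arguments. Unset Strict Implicit. Unset Printing Implicit Defensive.
Import Order.TTheory GRing.Theory Num.Theory.
Local Open Scope ring_scope.

(* A preference: complete, transitive binary relation on A x R,
   where (a, z) means alternative a is chosen and the agent pays z. *)
Definition is_preference (A : Type) (R : realType)
  (pref : A * R -> A * R -> Prop) : Prop :=
  (forall x y, pref x y \/ pref y x) /\
  (forall x y t, pref x y -> pref y t -> pref x t).

Definition pos_represents (A : Type) (R : realType)
  (u : A * R -> R) (pref : A * R -> A * R -> Prop) : Prop :=
  forall (a b : A) (za zb : R), (0 <= u (a, za) \/ 0 <= u (b, zb)) ->
    (pref (a, za) (b, zb) <-> u (a, za) >= u (b, zb)).

Definition quasi_linear (A : Type) (R : realType) (u : A * R -> R) : Prop :=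
  exists v : A -> R, forall (a : A) (z : R), u (a, z) = v a - z.

From mathcomp Require Import all_boot all_order all_algebra.
From mathcomp Require Import reals.
From mathcomp Require Import lra.
Set Implicit Arguments. Unset Strict Implicit. Unset Printing Implicit Defensive.
Import Order.TTheory GRing.Theory Num.Theory.
Local Open Scope ring_scope.

(* Write u(a,z) = v a - z and w(a,z) = v' a - z.  Paying z <= min(v a, v' a)
   for a makes both utilities nonnegative; paying v b - v a + z for b makes
   the agent u-indifferent, so (a,z) is weakly preferred, and w then forces
   v' a - v a >= v' b - v b.  By symmetry v' - v is constant.  Conversely,
   lowering u by C >= 0 only shrinks the region where w >= 0, and on it both
   utilities order pairs the same way. *)

Section PosRepresents.

Variables (A : Type) (R : realType).

Lemma pos_represents_quasi_linear_gap_le (u w : A * R -> R) (v v' : A -> R)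
    (pref : A * R -> A * R -> Prop) :
  (forall a z, u (a, z) = v a - z) -> (forall a z, w (a, z) = v' a - z) ->
  pos_represents u pref -> pos_represents w pref ->
  forall a b : A, v' b - v b <= v' a - v a.
Proof.
move=> hu hw pu pw a b.
pose za := Num.min (v a) (v' a).
pose zb := v b - v a + za.
have u_a_ge0 : 0 <= u (a, za) by rewrite hu subr_ge0 ge_min lexx.
have w_a_ge0 : 0 <= w (a, za) by rewrite hw subr_ge0 ge_min lexx orbT.
have pref_ab : pref (a, za) (b, zb).
  by apply/(pu a b za zb (or_introl u_a_ge0)); rewrite !hu /zb; lra.
have := (pw a b za zb (or_introl w_a_ge0)).1 pref_ab.
rewrite !hw /zb; lra.
Qed.

Lemma pos_represents_quasi_linear_gap_eq (u w : A * R -> R) (v v' : A -> R)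
    (pref : A * R -> A * R -> Prop) :
  (forall a z, u (a, z) = v a - z) -> (forall a z, w (a, z) = v' a - z) ->
  pos_represents u pref -> pos_represents w pref ->
  forall a b : A, v' a - v a = v' b - v b.
Proof.
move=> hu hw pu pw a b; apply/eqP; rewrite eq_le.
by rewrite !(pos_represents_quasi_linear_gap_le hu hw pu pw).
Qed.

Lemma pos_represents_subr (u w : A * R -> R) (C : R)
    (pref : A * R -> A * R -> Prop) :
  0 <= C -> (forall a z, w (a, z) = u (a, z) - C) ->
  pos_represents u pref -> pos_represents w pref.
Proof.
move=> C_ge0 hw pu a b za zb w_ge0.
rewrite !hw lerD2r; apply: pu.
by case: w_ge0; rewrite !hw => ?; [left | right]; lra.
Qed.

End PosRepresents.

Theorem claim2 (A : finType) (R : realType) (u w : A * R -> R)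
  (hu : quasi_linear u) (hw : quasi_linear w) :
  (forall pref : A * R -> A * R -> Prop,
     is_preference pref -> pos_represents u pref -> pos_represents w pref ->
     exists C : R, forall (a : A) (z : R), w (a, z) = u (a, z) + C) /\
  ((exists C : R, 0 <= C /\ forall (a : A) (z : R), w (a, z) = u (a, z) - C) ->
     forall pref : A * R -> A * R -> Prop,
       is_preference pref -> pos_represents u pref -> pos_represents w pref).
Proof.
split.
- case: hu hw => v hv [v' hv'] pref _ pu pw.
  case: (pickP A) => [a0 _ | A_empty]; last by exists 0 => a; have := A_empty a.
  exists (v' a0 - v a0) => a z.
  by rewrite (pos_represents_quasi_linear_gap_eq hv hv' pu pw a0 a) hv hv'; lra.
- by case=> C [C_ge0 hC] pref _; apply: pos_represents_subr C_ge0 hC.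
Qed.
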